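(* Let $F$ be a field and let $A$ and $B$ be unital locally matrix algebras over $F$. Then $A$ and $B$ are universally equivalent (as algebras in the signature of unital $F$-algebras, i.e. including the constant $1$) if and only if $\mathbf{n}(A)=\mathbf{n}(B)$.
   Context: All algebras are associative $F$-algebras with identity $1$. An algebra $A$ is a (unital) locally matrix algebra if every finite collection of elements $a_1,\ldots,a_s\in A$ lies in a subalgebra $B$ with $1_A\in B\subseteq A$ and $B\cong M_n(F)$ for some $n\ge1$. A Steinitz number is a formal product $\prod_{p\text{ prime}}p^{r_p}$ with $r_p\in\mathbb{N}\cup\{0,\infty\}$, ordered by divisibility ($v\mid u$ iff $u=vw$ for a Steinitz number $w$, where exponents add with $t+\infty=\infty$); least common multiples of arbitrary sets of positive integers exist in this lattice. For a unital locally matrix algebra $A$, $D(A)$ is the set of positive integers $n$ such that $A$ has a subalgebra $A'$ with $1_A\in A'$ and $A'\cong M_n(F)$, and $\mathbf{n}(A)$ is the least common multiple of $D(A)$. The signature of unital $F$-algebras consists of addition, multiplication, multiplication by each scalar $\alpha\in F$, and constants $0$ and $1$. The universal theory $UTh(A)$ is the set of universal closed formulas true in $A$; $A$ and $B$ are universally equivalent if $UTh(A)=UTh(B)$. *)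

From HB Require Import structures.
From mathcomp Require Import all_boot all_order all_algebra.
From Stdlib Require Import ClassicalEpsilon.
Set Implicit Arguments. Unset Strict Implicit. Unset Printing Implicit Defensive.
Import GRing.Theory.
Local Open Scope ring_scope.

(* f : M_n(F) -> A is an injective unital F-algebra homomorphism; its
   image is then a subalgebra A' of A with 1_A \in A' and A' ~= M_n(F). *)
Definition unital_mx_embedding (F : fieldType) (A : algType F) (n : nat)
    (f : 'M[F]_n -> A) : Prop :=
  [/\ forall (a : F) (X Y : 'M[F]_n), f (a *: X + Y) = a *: f X + f Y,
      forall X Y : 'M[F]_n, f (X *m Y) = f X * f Y,
      f 1%:M = 1 &
      injective f].

Definition locally_matrix (F : fieldType) (A : algType F) : Prop :=
  forall s : seq A, exists n : nat, (0 < n)%N /\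
    exists f : 'M[F]_n -> A, unital_mx_embedding f /\
      forall a, a \in s -> exists X, f X = a.

Definition Dset (F : fieldType) (A : algType F) (n : nat) : Prop :=
  (0 < n)%N /\ exists f : 'M[F]_n -> A, unital_mx_embedding f.

Definition primeT := {p : nat | prime p}.

(* exponent r_p at each prime p: Some k = k, None = infinity *)
Definition steinitz := primeT -> option nat.

Definition ext_add (x y : option nat) : option nat :=
  match x, y with Some a, Some b => Some (a + b)%N | _, _ => None end.

Definition steinitz_mul (u v : steinitz) : steinitz :=
  fun p => ext_add (u p) (v p).

Definition steinitz_dvd (v u : steinitz) : Prop :=
  exists w : steinitz, u = steinitz_mul v w.

Definition steinitz_of_nat (n : nat) : steinitz :=
  fun p => Some (logn (val p) n).

Definition is_steinitz_lcm (S : nat -> Prop) (u : steinitz) : Prop :=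
  (forall n, S n -> steinitz_dvd (steinitz_of_nat n) u) /\
  (forall v, (forall n, S n -> steinitz_dvd (steinitz_of_nat n) v) ->
     steinitz_dvd u v).

Definition steinitz_inhabited : inhabited steinitz :=
  inhabits (fun _ => None).

(* the least common multiple (which exists and is unique) *)
Definition steinitz_lcm (S : nat -> Prop) : steinitz :=
  epsilon steinitz_inhabited (is_steinitz_lcm S).

Definition steinitz_n (F : fieldType) (A : algType F) : steinitz :=
  steinitz_lcm (@Dset F A).

Inductive aterm (F : Type) : Type :=
  | TVar of nat
  | TZero
  | TOne
  | TAdd of aterm F & aterm F
  | TMul of aterm F & aterm F
  | TScale of F & aterm F.

Inductive aformula (F : Type) : Type :=
  | FTrue
  | FFalse
  | FEq of aterm F & aterm F
  | FNot of aformula F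
  | FAnd of aformula F & aformula F
  | FOr of aformula F & aformula F
  | FImp of aformula F & aformula F
  | FForall of nat & aformula F
  | FExists of nat & aformula F.

Arguments TZero {F}. Arguments TOne {F}. Arguments FTrue {F}. Arguments FFalse {F}.

Fixpoint term_vars F (t : aterm F) : seq nat :=
  match t with
  | TVar i => [:: i]
  | TZero | TOne => [::]
  | TAdd t1 t2 | TMul t1 t2 => term_vars t1 ++ term_vars t2
  | TScale _ t1 => term_vars t1
  end.

Fixpoint free_vars F (f : aformula F) : seq nat :=
  match f with
  | FTrue | FFalse => [::]
  | FEq t1 t2 => term_vars t1 ++ term_vars t2
  | FNot g => free_vars g
  | FAnd g h | FOr g h | FImp g h => free_vars g ++ free_vars h
  | FForall i g | FExists i g => filter (fun j => j != i) (free_vars g)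
  end.

Fixpoint qfree F (f : aformula F) : bool :=
  match f with
  | FTrue | FFalse | FEq _ _ => true
  | FNot g => qfree g
  | FAnd g h | FOr g h | FImp g h => qfree g && qfree h
  | FForall _ _ | FExists _ _ => false
  end.

Fixpoint universal F (f : aformula F) : bool :=
  match f with
  | FForall _ g => universal g
  | g => qfree g
  end.

Definition closed_formula F (f : aformula F) : bool := free_vars f == [::].

Fixpoint term_eval (F : fieldType) (A : algType F) (e : nat -> A)
    (t : aterm F) : A :=
  match t with
  | TVar i => e i
  | TZero => 0
  | TOne => 1
  | TAdd t1 t2 => term_eval e t1 + term_eval e t2
  | TMul t1 t2 => term_eval e t1 * term_eval e t2
  | TScale a t1 => a *: term_eval e t1
  end.

Definition env_set (T : Type) (e : nat -> T) (i : nat) (x : T) : nat -> T :=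
  fun j => if j == i then x else e j.

Fixpoint holds (F : fieldType) (A : algType F) (e : nat -> A)
    (f : aformula F) : Prop :=
  match f with
  | FTrue => True
  | FFalse => False
  | FEq t1 t2 => term_eval e t1 = term_eval e t2
  | FNot g => ~ holds e g
  | FAnd g h => holds e g /\ holds e h
  | FOr g h => holds e g \/ holds e h
  | FImp g h => holds e g -> holds e h
  | FForall i g => forall x : A, holds (env_set e i x) g
  | FExists i g => exists x : A, holds (env_set e i x) g
  end.

(* A |= f for a sentence f (truth of a closed formula is independent of e) *)
Definition models (F : fieldType) (A : algType F) (f : aformula F) : Prop :=
  forall e : nat -> A, holds e f.

Definition UTh (F : fieldType) (A : algType F) (f : aformula F) : Prop :=
  universal f /\ closed_formula f /\ models A f.

Definition univ_equiv (F : fieldType) (A B : algType F) : Prop :=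
  forall f : aformula F, UTh A f <-> UTh B f.

(* The universal sentence "there is no full set of n x n matrix units", i.e.
   forall x_ij, ~ (sum_i x_ii = 1 /\ x_ij x_kl = [j = k] x_il), fails in A exactly
   when n is in D(A), so UTh(A) determines D(A).  Conversely, quantifier-free
   formulas are preserved and reflected by unital embeddings, and finitely many
   elements of a locally matrix algebra B lie in a unital copy of M_n(F) with n in
   D(B); so if D(B) is contained in D(A), every universal sentence true in A is true
   in B.  Finally, D(A) is closed under divisors (X |-> X (x) 1) and under lcm (two
   matrix subalgebras lie in a common one, and a unital embedding of M_a(F) into
   M_n(F) forces a | n by a rank count), hence D(A) is exactly the set of positive
   integers dividing n(A). *)

From HB Require Import structures.
From mathcomp Require Import all_boot all_order all_algebra.
From mathcomp Require Import mxtens.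
From Stdlib Require Import Classical ClassicalEpsilon.
From Stdlib Require Import FunctionalExtensionality PropExtensionality.
Set Implicit Arguments. Unset Strict Implicit. Unset Printing Implicit Defensive.
Import GRing.Theory.
Local Open Scope ring_scope.

Section Formulas.
Variable F : fieldType.
Implicit Types (A : algType F) (f g : aformula F) (t : aterm F).

Fixpoint qf_body f : aformula F := if f is FForall _ g then qf_body g else f.

Definition forall_closure g : aformula F := foldr (@FForall F) g (free_vars g).

Lemma universal_qf_body f : universal f -> qfree (qf_body f).
Proof. by elim: f. Qed.

Lemma env_set_id (T : Type) (e : nat -> T) i : env_set e i (e i) = e.
Proof.
by apply: functional_extensionality => j; rewrite /env_set; case: eqP => [->|].
Qed.

Lemma models_FForall A i g : models A (FForall i g) <-> models A g.
Proof.
split=> [h e | h e x]; last exact: h.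
by rewrite -(env_set_id e i); apply: h.
Qed.

Lemma models_qf_body A f : models A (qf_body f) <-> models A f.
Proof. by elim: f => //= i g ->; rewrite models_FForall. Qed.

Lemma free_vars_foralls g vs :
  free_vars (foldr (@FForall F) g vs) = [seq j <- free_vars g | j \notin vs].
Proof.
elim: vs => [|v vs IH] /=; first by rewrite filter_predT.
rewrite IH -filter_predI; apply: eq_filter => j /=.
by rewrite inE negb_or andbC.
Qed.

Lemma closed_forall_closure g : closed_formula (forall_closure g).
Proof.
apply/eqP; rewrite free_vars_foralls -[RHS](filter_pred0 (free_vars g)).
by apply: eq_in_filter => j ->.
Qed.

Lemma universal_forall_closure g : qfree g -> universal (forall_closure g).
Proof. by move=> qf_g; rewrite /forall_closure; elim: (free_vars g); case: g qf_g. Qed.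

Lemma UTh_forall_closure A g : qfree g -> UTh A (forall_closure g) <-> models A g.
Proof.
move=> qf_g; rewrite /UTh universal_forall_closure // closed_forall_closure.
rewrite -models_qf_body /forall_closure.
have -> : qf_body (foldr (@FForall F) g (free_vars g)) = g.
  by elim: (free_vars g) => //=; case: g qf_g.
by split=> [[_ []] | ].
Qed.

Lemma term_eval_ext A (e1 e2 : nat -> A) t :
  {in term_vars t, e1 =1 e2} -> term_eval e1 t = term_eval e2 t.
Proof.
elim: t => //= [i|t1 IH1 t2 IH2|t1 IH1 t2 IH2|c t IH] e12.
- by apply: e12; rewrite inE.
- by rewrite IH1 ?IH2 // => j hj; apply: e12; rewrite mem_cat hj ?orbT.
- by rewrite IH1 ?IH2 // => j hj; apply: e12; rewrite mem_cat hj ?orbT.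
- by rewrite IH.
Qed.

Lemma holds_ext A (e1 e2 : nat -> A) g :
  qfree g -> {in free_vars g, e1 =1 e2} -> holds e1 g <-> holds e2 g.
Proof.
elim: g => //= [t1 t2|g IH|g IHg h IHh|g IHg h IHh|g IHg h IHh] qf e12.
- by rewrite !(term_eval_ext (e2 := e2)) // => j hj; apply: e12;
    rewrite mem_cat hj ?orbT.
- by rewrite IH.
all: case/andP: qf => qf_g qf_h.
all: by rewrite IHg ?IHh // => j hj; apply: e12; rewrite mem_cat hj ?orbT.
Qed.

End Formulas.

Section LinearFun.
Variables (R : pzRingType) (U V : lmodType R) (f : U -> V).
Hypothesis f_lin : linear f.

HB.instance Definition _ := GRing.isLinear.Build R U V *:%R f f_lin.

Lemma linear_fun0 : f 0 = 0. Proof. exact: raddf0. Qed.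
Lemma linear_funD x y : f (x + y) = f x + f y. Proof. exact: raddfD. Qed.
Lemma linear_funZ a x : f (a *: x) = a *: f x. Proof. exact: linearZZ. Qed.
Lemma linear_fun_sum (I : Type) (r : seq I) (P : pred I) (G : I -> U) :
  f (\sum_(i <- r | P i) G i) = \sum_(i <- r | P i) f (G i).
Proof. exact: raddf_sum. Qed.

End LinearFun.

Section Embedding.
Variables (F : fieldType) (R A : algType F) (f : R -> A).
Hypotheses (f_lin : linear f) (f_mul : {morph f : x y / x * y}).
Hypotheses (f1 : f 1 = 1) (f_inj : injective f).

Lemma term_eval_comp (e : nat -> R) t : term_eval (f \o e) t = f (term_eval e t).
Proof.
elim: t => [i||| t1 IH1 t2 IH2 | t1 IH1 t2 IH2 | c t IH] /=.
- by [].
- by rewrite linear_fun0.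
- by rewrite f1.
- by rewrite IH1 IH2 linear_funD.
- by rewrite IH1 IH2 f_mul.
- by rewrite IH linear_funZ.
Qed.

Lemma holds_comp (e : nat -> R) g : qfree g -> holds (f \o e) g <-> holds e g.
Proof.
elim: g => //= [t1 t2|g IH|g IHg h IHh|g IHg h IHh|g IHg h IHh] qf.
- by rewrite !term_eval_comp; split=> [/f_inj|->].
- by rewrite IH.
all: by case/andP: qf => /IHg -> /IHh ->.
Qed.

End Embedding.

Definition ext_le (x y : option nat) : bool :=
  if y is Some b then (if x is Some a then (a <= b)%N else false) else true.

Lemma steinitz_dvdP (v u : steinitz) :
  steinitz_dvd v u <-> forall p, ext_le (v p) (u p).
Proof.
split=> [[w ->] p | le_vu].
  by rewrite /steinitz_mul; case: (v p) (w p) => [a|] [b|] //=; rewrite leq_addr.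
exists (fun p => if (v p, u p) is (Some a, Some b) then Some (b - a)%N else None).
apply: functional_extensionality => p; rewrite /steinitz_mul.
by move: (le_vu p); case: (v p) (u p) => [a|] [b|] //= /subnKC->.
Qed.

Lemma ex_minn_classic (P : nat -> Prop) :
  (exists n, P n) -> exists2 n, P n & forall m, P m -> (n <= m)%N.
Proof.
move=> [n Pn].
pose b m : bool := if excluded_middle_informative (P m) then true else false.
have bP m : reflect (P m) (b m).
  by rewrite /b; case: excluded_middle_informative => h; constructor.
have [m /bP Pm m_min] := ex_minnP (ex_intro b n (introT (bP n) Pn)).
by exists m => // k /bP /m_min.
Qed.

Section SteinitzLcm.
Variable S : nat -> Prop.

Definition logn_bound (p : primeT) (K : nat) := forall m, S m -> (logn (val p) m <= K)%N.

Definition lcm_exponent_spec (p : primeT) (o : option nat) : Prop :=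
  if o is Some K then logn_bound p K /\ forall K', logn_bound p K' -> (K <= K')%N
  else forall K, ~ logn_bound p K.

Lemma lcm_exponent_exists p : exists o, lcm_exponent_spec p o.
Proof.
have [/ex_minn_classic [K bK K_min] | unbounded] := classic (exists K, logn_bound p K).
  by exists (Some K).
by exists None => K bK; apply: unbounded; exists K.
Qed.

Lemma steinitz_lcm_spec : is_steinitz_lcm S (steinitz_lcm S).
Proof.
apply: epsilon_spec.
pose u p := epsilon (inhabits None) (lcm_exponent_spec p).
have u_spec p : lcm_exponent_spec p (u p) := epsilon_spec _ _ (lcm_exponent_exists p).
exists u; split=> [m Sm | v v_ub]; apply/steinitz_dvdP => p.
  by have := u_spec p; case: (u p) => [K [bK _]|] //=; apply: bK.
case vp: (v p) => [K|] //.
have bK : logn_bound p K.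
  by move=> m /v_ub /steinitz_dvdP /(_ p); rewrite vp.
by have := u_spec p; case: (u p) => [K' [_ /(_ K bK)]|/(_ K bK)].
Qed.

Lemma steinitz_lcm_logn_witness n p (p_pr : prime p) :
  steinitz_dvd (steinitz_of_nat n) (steinitz_lcm S) -> (0 < logn p n)%N ->
  exists2 m, S m & (logn p n <= logn p m)%N.
Proof.
move=> /steinitz_dvdP n_dvd logn_gt0; apply: NNPP => no_witness.
have logn_lt m : S m -> (logn p m < logn p n)%N.
  by move=> Sm; rewrite ltnNge; apply/negP => le; apply: no_witness; exists m.
pose P : primeT := exist _ p p_pr.
(* Without a witness, lowering the p-exponent of the lcm still leaves a common
   multiple, which contradicts n | lcm at p. *)
pose v q := if q == P then Some (logn p n).-1 else steinitz_lcm S q.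
have [lcm_ub lcm_least] := steinitz_lcm_spec.
have /steinitz_dvdP /(_ P) : steinitz_dvd (steinitz_lcm S) v.
  apply: lcm_least => m Sm; apply/steinitz_dvdP => q; rewrite /v.
  case: eqP => [->|_]; last by have /steinitz_dvdP := lcm_ub m Sm.
  by rewrite /= -ltnS prednK // logn_lt.
move: (n_dvd P); rewrite /v eqxx /=.
case: (steinitz_lcm S P) => [b|] //= le_nb /(leq_trans le_nb).
by rewrite -ltnS prednK // ltnn.
Qed.

End SteinitzLcm.

Lemma mxdirect_sum_idempotents (F : fieldType) (I : finType) n (E : I -> 'M[F]_n) :
    (forall i, E i *m E i = E i) -> (forall i j, i != j -> E i *m E j = 0) ->
  mxdirect (\sum_i E i)%MS.
Proof.
move=> E_idem E_orth; apply/mxdirect_sumsP => i _; set X := (_ :&: _)%MS.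
have /submxP [Y defX] : (X <= E i)%MS := capmxSl _ _.
have /sub_sumsmxP [u defX'] : (X <= \sum_(j | true && (j != i)) E j)%MS := capmxSr _ _.
have X_Ei : X *m E i = X by rewrite defX -mulmxA E_idem.
rewrite -X_Ei {1}defX' mulmx_suml big1 // => j /= ji.
by rewrite -mulmxA E_orth ?mulmx0.
Qed.

(* The images of the diagonal matrix units are orthogonal idempotents of equal
   rank summing to 1. *)
Lemma mx_embedding_dvdn (F : fieldType) a n (f : 'M[F]_a.+1 -> 'M[F]_n.+1) :
  unital_mx_embedding f -> (a.+1 %| n.+1)%N.
Proof.
case=> f_lin f_mul f1 _; pose E i := f (delta_mx i i).
have f_mulmx X Y : f (X *m Y) = f X *m f Y := f_mul X Y.
have f1mx : f 1%:M = 1%:M := f1.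
have E_sum : \sum_i E i = 1%:M.
  rewrite -(linear_fun_sum f_lin) -f1mx scalar_mx_sum_delta.
  by congr f; apply: eq_bigr => i _; rewrite scale1r.
have rank_E i j : (\rank (E i) <= \rank (E j))%N.
  have -> : E i = f (delta_mx i j) *m E j *m f (delta_mx j i).
    by rewrite -!f_mulmx !mul_delta_mx.
  exact: leq_trans (mxrankM_maxl _ _) (mxrankM_maxr _ _).
have /mxdirectP /= rank_sum : mxdirect (\sum_i E i)%MS.
  apply: mxdirect_sum_idempotents => [i | i j ij].
    by rewrite -f_mulmx mul_delta_mx.
  by rewrite -f_mulmx mul_delta_mx_0 ?linear_fun0.
have <- : \rank (\sum_i E i)%MS = n.+1.
  rewrite -[RHS](mxrank1 F n.+1); apply/eqmx_rank/andP; split; first exact: submx1.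
  by rewrite -E_sum summx_sub_sums.
rewrite rank_sum (eq_bigr (fun _ => \rank (E 0))) => [|i _].
  by rewrite sum_nat_const card_ord dvdn_mulr.
by apply/eqP; rewrite eqn_leq !rank_E.
Qed.

Section DsetClosure.
Variables (F : fieldType) (A : algType F).

Lemma mx_embedding_tensmx1 d k (f : 'M[F]_(d * k.+1) -> A) :
  unital_mx_embedding f -> unital_mx_embedding (fun X : 'M[F]_d => f (X *t 1%:M)).
Proof.
case=> f_lin f_mul f1 f_inj; split.
- move=> c X Y; rewrite -f_lin; congr f.
  by apply/matrixP => i j; rewrite !mxE mulrDl mulrA.
- by move=> X Y; rewrite -f_mul tensmx_mul mulmx1.
- rewrite -f1; congr f; apply/matrixP => i j.
  case: (mxtens_indexP i) => i0 i1; case: (mxtens_indexP j) => j0 j1.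
  by rewrite tensmxE !mxE (inj_eq (can_inj (@mxtens_indexK _ _))) -natrM mulnb.
- move=> X Y /f_inj /matrixP XY; apply/matrixP => i j.
  have := XY (mxtens_index (i, ord0)) (mxtens_index (j, ord0)).
  by rewrite !tensmxE !mxE eqxx !mulr1.
Qed.

Lemma Dset_dvdn n d : Dset A n -> (0 < d)%N -> (d %| n)%N -> Dset A d.
Proof.
move=> [n_gt0 [f f_emb]] d_gt0 /dvdnP [[|k] def_n]; first by rewrite def_n in n_gt0.
split=> //; move: f f_emb; rewrite def_n mulnC => f f_emb.
by exists (fun X => f (X *t 1%:M)); apply: mx_embedding_tensmx1.
Qed.

Lemma mx_embedding_factor a n (fa : 'M[F]_a -> A) (g : 'M[F]_n.+1 -> A) :
  unital_mx_embedding fa -> unital_mx_embedding g ->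
  (forall i j, exists Y, g Y = fa (delta_mx i j)) ->
  exists phi : 'M[F]_a -> 'M[F]_n.+1, unital_mx_embedding phi.
Proof.
move=> [fa_lin fa_mul fa1 fa_inj] [g_lin g_mul g1 g_inj] g_delta.
pose Yd i j := epsilon (inhabits 0) (fun Y => g Y = fa (delta_mx i j)).
have g_onto X : exists Y, g Y = fa X.
  exists (\sum_i \sum_j X i j *: Yd i j).
  rewrite [in RHS](matrix_sum_delta X) !(linear_fun_sum g_lin) !(linear_fun_sum fa_lin).
  apply: eq_bigr => i _; rewrite !(linear_fun_sum g_lin) !(linear_fun_sum fa_lin).
  apply: eq_bigr => j _; rewrite !linear_funZ //.
  by rewrite (epsilon_spec _ _ (g_delta i j)).
pose phi X := epsilon (inhabits 0) (fun Y => g Y = fa X).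
have g_phi X : g (phi X) = fa X := epsilon_spec _ _ (g_onto X).
exists phi; split.
- by move=> c X Y; apply: g_inj; rewrite g_lin !g_phi fa_lin.
- by move=> X Y; apply: g_inj; rewrite g_mul !g_phi fa_mul.
- by apply: g_inj; rewrite g1 g_phi fa1.
- by move=> X Y /(congr1 g); rewrite !g_phi => /fa_inj.
Qed.

Hypothesis lmA : locally_matrix A.

Lemma Dset1 : Dset A 1.
Proof.
have [n [n_gt0 [f [f_emb _]]]] := lmA [::].
by apply: (@Dset_dvdn n) => //; split => //; exists f.
Qed.

Lemma Dset_lcmn a b : Dset A a -> Dset A b -> Dset A (lcmn a b).
Proof.
move=> [a_gt0 [fa fa_emb]] [b_gt0 [fb fb_emb]].
case: a a_gt0 fa fa_emb => // a _ fa fa_emb.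
case: b b_gt0 fb fb_emb => // b _ fb fb_emb.
pose units m (f : 'M[F]_m -> A) := [seq f (delta_mx ij.1 ij.2) | ij : 'I_m * 'I_m].
have units_in m f i j : f (delta_mx i j) \in units m f.
  exact: (codom_f (fun ij => f (delta_mx ij.1 ij.2)) (i, j)).
have [[|n] [//= _ [g [g_emb g_onto]]]] := lmA (units _ fa ++ units _ fb).
have [phi_a /mx_embedding_dvdn dvd_a] :
    exists phi : 'M[F]_a.+1 -> 'M[F]_n.+1, unital_mx_embedding phi.
  apply: (mx_embedding_factor fa_emb g_emb) => i j.
  by apply: g_onto; rewrite mem_cat units_in.
have [phi_b /mx_embedding_dvdn dvd_b] :
    exists phi : 'M[F]_b.+1 -> 'M[F]_n.+1, unital_mx_embedding phi.
  apply: (mx_embedding_factor fb_emb g_emb) => i j.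
  by apply: g_onto; rewrite mem_cat units_in orbT.
apply: (@Dset_dvdn n.+1); first by split => //; exists g.
  by rewrite lcmn_gt0.
by rewrite dvdn_lcm dvd_a dvd_b.
Qed.

Lemma Dset_of_logn n : (0 < n)%N ->
    (forall p, p \in primes n -> exists2 m, Dset A m & (logn p n <= logn p m)%N) ->
  Dset A n.
Proof.
move=> n_gt0 witness.
have [L DL dvdL] : exists2 L, Dset A L & forall p, p \in primes n -> (p ^ logn p n %| L)%N.
  elim: (primes n) witness => [|p ps IH] witness; first by exists 1%N; first exact: Dset1.
  have [q q_ps|L DL dvdL] := IH; first by apply: witness; rewrite inE q_ps orbT.
  have [m Dm le_nm] := witness p (mem_head p ps).
  exists (lcmn L m); first exact: Dset_lcmn.
  move=> q /predU1P [-> | q_ps].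
    by rewrite (dvdn_trans (dvdn_exp2l p le_nm)) ?(dvdn_trans (pfactor_dvdnn p m)) ?dvdn_lcmr.
  by rewrite (dvdn_trans (dvdL q q_ps)) ?dvdn_lcml.
apply: (Dset_dvdn DL n_gt0); apply/dvdn_partP => // p p_n.
by rewrite p_part; apply: dvdL.
Qed.

Lemma DsetE n :
  Dset A n <-> (0 < n)%N /\ steinitz_dvd (steinitz_of_nat n) (steinitz_n A).
Proof.
split=> [Dn | [n_gt0 n_dvd]].
  by split; [case: Dn | have [lcm_ub _] := steinitz_lcm_spec (Dset A); apply: lcm_ub].
apply: Dset_of_logn => // p p_n.
have p_pr : prime p by move: p_n; rewrite mem_primes => /andP[].
by apply: (steinitz_lcm_logn_witness p_pr n_dvd); rewrite logn_gt0.
Qed.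

End DsetClosure.

Section MatrixUnits.
Variables (F : fieldType) (A : algType F) (n : nat).

Definition mx_units (E : 'I_n -> 'I_n -> A) : Prop :=
  \sum_i E i i = 1 /\ forall i j k l, E i j * E k l = if j == k then E i l else 0.

Lemma mx_embedding_units (f : 'M[F]_n -> A) :
  unital_mx_embedding f -> mx_units (fun i j => f (delta_mx i j)).
Proof.
case=> f_lin f_mul f1 _; split=> [|i j k l].
  rewrite -(linear_fun_sum f_lin) -f1 scalar_mx_sum_delta.
  by congr f; apply: eq_bigr => i _; rewrite scale1r.
rewrite -f_mul mul_delta_mx_cond.
by case: (j == k); rewrite ?mulr1n ?mulr0n ?linear_fun0.
Qed.

Variable E : 'I_n -> 'I_n -> A.
Hypothesis E_units : mx_units E.

Definition mx_of_units (X : 'M[F]_n) : A := \sum_i \sum_j X i j *: E i j.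

Lemma mx_units_mull i j X : E i j * mx_of_units X = \sum_l X j l *: E i l.
Proof.
have [_ E_mul] := E_units.
rewrite mulr_sumr [LHS](bigD1 j) //= [X in _ + X]big1 ?addr0 => [|k kj].
  by rewrite mulr_sumr; apply: eq_bigr => l _; rewrite -scalerAr E_mul eqxx.
rewrite mulr_sumr big1 // => l _.
by rewrite -scalerAr E_mul eq_sym (negPf kj) scaler0.
Qed.

Lemma mx_units_sandwich a b c d X :
  E a b * mx_of_units X * E c d = X b c *: E a d.
Proof.
have [_ E_mul] := E_units.
rewrite mx_units_mull mulr_suml [LHS](bigD1 c) //= [X in _ + X]big1 ?addr0 => [|l lc].
  by rewrite -scalerAl E_mul eqxx.
by rewrite -scalerAl E_mul (negPf lc) scaler0.
Qed.

Lemma mx_units_embedding : unital_mx_embedding mx_of_units.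
Proof.
have [E_sum _] := E_units; split.
- move=> c X Y; rewrite /mx_of_units scaler_sumr -big_split; apply: eq_bigr => i _.
  rewrite scaler_sumr -big_split; apply: eq_bigr => j _.
  by rewrite !mxE scalerDl scalerA.
- move=> X Y; rewrite [mx_of_units (X *m Y)]/mx_of_units [mx_of_units X]/mx_of_units.
  rewrite mulr_suml; apply: eq_bigr => i _; rewrite mulr_suml.
  under [RHS]eq_bigr => j _ do rewrite -scalerAl mx_units_mull scaler_sumr.
  rewrite exchange_big; apply: eq_bigr => l _; rewrite mxE scaler_suml.
  by apply: eq_bigr => j _; rewrite scalerA.
- rewrite /mx_of_units -E_sum; apply: eq_bigr => i _.
  rewrite (bigD1 i) //= big1 ?addr0 => [|j ji]; first by rewrite mxE eqxx scale1r.
  by rewrite mxE eq_sym (negPf ji) scale0r.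
- move=> X Y eqXY; apply/matrixP => b c.
  have : X b c *: (1 : A) = Y b c *: 1.
    rewrite -E_sum !scaler_sumr; apply: eq_bigr => a _.
    by rewrite -!mx_units_sandwich eqXY.
  by move/eqP; rewrite -subr_eq0 -scalerBl scaler_eq0 oner_eq0 orbF subr_eq0 => /eqP.
Qed.

End MatrixUnits.

Lemma Dset_mx_units (F : fieldType) (A : algType F) n :
  (0 < n)%N -> Dset A n <-> exists E : 'I_n -> 'I_n -> A, mx_units E.
Proof.
move=> n_gt0; split=> [[_ [f f_emb]] | [E E_units]].
  by exists (fun i j => f (delta_mx i j)); apply: mx_embedding_units.
by split=> //; exists (mx_of_units E); apply: mx_units_embedding.
Qed.

Section MxUnitsFormula.
Variables (F : fieldType) (n : nat).

Definition mx_unit_var (i j : 'I_n) : aterm F := @TVar F (i * n + j).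

Definition FAnd_seq (T : Type) (s : seq T) (G : T -> aformula F) : aformula F :=
  foldr (fun x => FAnd (G x)) FTrue s.

Definition mx_units_formula : aformula F :=
  FAnd (FEq (foldr (fun i => TAdd (mx_unit_var i i)) TZero (index_enum 'I_n)) TOne)
    (FAnd_seq (index_enum ('I_n * 'I_n * 'I_n * 'I_n)%type) (fun '(i, j, k, l) =>
      FEq (TMul (mx_unit_var i j) (mx_unit_var k l))
          (if j == k then mx_unit_var i l else TZero))).

Definition no_mx_units_sentence : aformula F := forall_closure (FNot mx_units_formula).

Lemma holds_FAnd_seq (A : algType F) (e : nat -> A) (T : eqType) (s : seq T) G :
  holds e (FAnd_seq s G) <-> forall x, x \in s -> holds e (G x).
Proof.
elim: s => [|x s IH] /=; first by [].
rewrite IH; split=> [[Gx Gs] y /predU1P [-> //|]|Gs]; first exact: Gs.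
by split=> [|y ys]; apply: Gs; rewrite inE ?eqxx ?ys ?orbT.
Qed.

Lemma qfree_mx_units_formula : qfree mx_units_formula.
Proof.
rewrite /= /FAnd_seq.
by elim: (index_enum _) => //= -[[[i j] k] l] s ->; case: (j == k).
Qed.

Lemma holds_mx_units_formula (A : algType F) (e : nat -> A) :
  holds e mx_units_formula <-> mx_units (fun i j : 'I_n => e (i * n + j)%N).
Proof.
rewrite /= holds_FAnd_seq.
have -> : term_eval e (foldr (fun i : 'I_n => TAdd (mx_unit_var i i)) TZero (index_enum 'I_n))
    = \sum_(i < n) e (i * n + i)%N.
  by rewrite unlock; elim: (index_enum 'I_n) => //= i s ->.
split=> -[e_sum e_mul]; split=> //.
  by move=> i j k l; have := e_mul (i, j, k, l) (mem_index_enum _); case: (j == k).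
by move=> [[[i j] k] l] _; have := e_mul i j k l; case: (j == k).
Qed.

End MxUnitsFormula.

Lemma Dset_UTh (F : fieldType) (A : algType F) n :
  (0 < n)%N -> Dset A n <-> ~ UTh A (no_mx_units_sentence F n).
Proof.
move=> n_gt0; rewrite (Dset_mx_units _ n_gt0) UTh_forall_closure; last first.
  exact: qfree_mx_units_formula.
split=> [[E E_units] no_units | not_models].
  case: n n_gt0 E E_units no_units => // n _ E E_units no_units.
  pose e k := E (inord (k %/ n.+1)) (inord (k %% n.+1)).
  apply: (no_units e); apply/holds_mx_units_formula.
  suff -> : (fun i j : 'I_n.+1 => e (i * n.+1 + j)%N) = E by [].
  do 2!apply: functional_extensionality => ?.
  by rewrite /e divnMDl // modnMDl !modn_small // divn_small // addn0 !inord_val.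
apply: NNPP => no_E; apply: not_models => e /holds_mx_units_formula E_units.
by apply: no_E; eexists; apply: E_units.
Qed.

Section Transfer.
Variables (F : fieldType) (A B : algType F).
Hypothesis lmB : locally_matrix B.
Hypothesis DBA : forall n, Dset B n -> Dset A n.

Lemma models_transfer g : qfree g -> models A g -> models B g.
Proof.
move=> qf_g A_g eB.
have [[|n] [//= _ [h [h_emb h_onto]]]] := lmB (map eB (free_vars g)).
have [_ [f f_emb]] := DBA (conj (ltn0Sn n) (ex_intro _ h h_emb)).
pose eM j := epsilon (inhabits 0) (fun X => h X = eB j).
have h_eM : {in free_vars g, h \o eM =1 eB}.
  by move=> j j_g; apply: (epsilon_spec _ _ (h_onto _ (map_f eB j_g))).
have [h_lin h_mul h1 h_inj] := h_emb; have [f_lin f_mul f1 f_inj] := f_emb.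
rewrite -(holds_ext qf_g h_eM) (holds_comp h_lin h_mul h1 h_inj) //.
by rewrite -(holds_comp f_lin f_mul f1 f_inj).
Qed.

Lemma UTh_transfer g : UTh A g -> UTh B g.
Proof.
move=> [univ_g [closed_g A_g]]; split=> //; split=> //.
rewrite -models_qf_body; apply: models_transfer; first exact: universal_qf_body.
by rewrite models_qf_body.
Qed.

End Transfer.

Lemma univ_equiv_Dset (F : fieldType) (A B : algType F) :
  locally_matrix A -> locally_matrix B -> univ_equiv A B <-> Dset A = Dset B.
Proof.
move=> lmA lmB; split=> [AB | DAB g].
  apply: functional_extensionality => n; apply: propositional_extensionality.
  have [-> | n_gt0] := posnP n; first by split=> -[].
  by rewrite !Dset_UTh // AB.
by split; apply: UTh_transfer => // n; rewrite DAB.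
Qed.

Theorem theorem3 (F : fieldType) (A B : algType F) :
  locally_matrix A -> locally_matrix B ->
  (univ_equiv A B <-> steinitz_n A = steinitz_n B).
Proof.
move=> lmA lmB; rewrite univ_equiv_Dset //.
split=> [| nAB]; first by rewrite /steinitz_n => ->.
apply: functional_extensionality => n; apply: propositional_extensionality.
by rewrite !DsetE // nAB.
Qed.
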